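(* Let $k\in\omega\setminus\{0,1\}$ and let $\varphi:\omega\to\omega$ be a nondecreasing function with $\varphi(n)\ge n$ for all $n\in\omega$ and $\varphi(0)=0$. Then there exist a closed class $A$ of decision tables from $\mathcal M_k^\infty$ and a bounded complexity measure $\psi$ such that $\mathcal H^\infty_{\psi,A}$ is everywhere defined and $\varphi(n)\le\mathcal H^\infty_{\psi,A}(n)\le\varphi(n)+n$ for all $n\in\omega$.
   Context: Notation: $\omega=\{0,1,2,\dots\}$; $\mathcal P(\omega)$ is the set of nonempty finite subsets of $\omega$; for $k\in\omega\setminus\{0,1\}$, $E_k=\{0,1,\dots,k-1\}$. $P=\{f_i:i\in\omega\}$ is a set of attributes, $f_i\neq f_j$ for $i\ne j$. Decision tables: $\mathcal M_k^\infty$ is the set of rectangular tables filled with numbers from $E_k$, whose columns are labeled with pairwise different attributes from $P$, whose rows are pairwise different, and each row of which is labeled with a set from $\mathcal P(\omega)$ (its set of decisions). The empty table (no rows) is denoted $\Lambda$ and belongs to $\mathcal M_k^\infty$. For $T\in\mathcal M_k^\infty$: $\Delta(T)$ is the set of rows; $\Pi(T)$ is the intersection of the decision sets of all rows (common decisions); $\mathrm{At}(T)$ is the set of attributes labeling columns. For nonempty $T$ and a word $\alpha=(f_{i_1},\delta_1)\cdots(f_{i_m},\delta_m)$ with $f_{i_j}\in\mathrm{At}(T)$, $\delta_j\in E_k$, $T\alpha$ is the subtable of $T$ consisting of the rows having value $\delta_j$ in the column $f_{i_j}$ for all $j$; for the empty word $\lambda$, $T\lambda=T$. Operations: for $D\subseteq\mathrm{At}(T)$,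 $I(D,T)$ is obtained from $T$ by deleting the columns labeled with attributes from $D$ and, in each group of rows coinciding on the remaining columns, keeping only the first row; $I(\mathrm{At}(T),T)=\Lambda$. For $\nu:E_k^{|\mathrm{At}(T)|}\to\mathcal P(\omega)$, $J(\nu,T)$ is obtained by replacing the decision set of each row $\bar\delta$ by $\nu(\bar\delta)$. $[T]=\{J(\nu,I(D,T)):D\subseteq\mathrm{At}(T),\ \nu:E_k^{|\mathrm{At}(T)\setminus D|}\to\mathcal P(\omega)\}$; for nonempty $A\subseteq\mathcal M_k^\infty$, $[A]=\bigcup_{T\in A}[T]$. $A$ is a closed class if $[A]=A$. Decision trees: a $k$-decision tree is a finite directed rooted tree with at least two nodes in which the root and the edges leaving the root are unlabeled, each terminal node is labeled with a decision from $\omega$, and each other node is labeled with an attribute from $P$, each edge leaving such a node being labeled with a number from $E_k$. $\mathrm{At}(\Gamma)$ is the set of attributes labeling nodes of $\Gamma$. For a complete path $\tau=v_1,d_1,\dots,v_m,d_m,v_{m+1}$ (from the root to a terminal node), $\pi(\tau)=\lambda$ if $m=1$, and otherwise $\pi(\tau)=(f_{i_2},\delta_2)\cdots(f_{i_m},\delta_m)$ where $v_j$ is labeled $f_{i_j}$ and $d_j$ is labeled $\delta_j$; $T(\tau)=T\pi(\tau)$. For $T\ne\Lambda$, a nondeterministic decision tree for $T$ is a $k$-decision tree $\Gamma$ with $\mathrm{At}(\Gamma)\subseteq\mathrm{At}(T)$ such that every row of $T$ belongs to $T(\tau)$ for some complete path $\tau$, and for every complete path $\tau$ either $T(\tau)=\Lambda$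 or the decision at the terminal node of $\tau$ belongs to $\Pi(T(\tau))$. A deterministic decision tree for $T$ is a nondeterministic decision tree for $T$ in which, additionally, exactly one edge leaves the root and the edges leaving any node that is neither the root nor terminal are labeled with pairwise different numbers. Complexity measures: a partially bounded complexity measure is a function $\psi:P^*\to\omega$ on finite words over $P$ such that for all words $\alpha_1,\alpha_2$: $\psi(\alpha_1)=0$ iff $\alpha_1=\lambda$; $\psi(\alpha_1)$ is invariant under permutation of letters; $\psi(\alpha_1)\le\psi(\alpha_1\alpha_2)$; $\psi(\alpha_1\alpha_2)\le\psi(\alpha_1)+\psi(\alpha_2)$. It is bounded if in addition $\psi(\alpha)\ge|\alpha|$ for all $\alpha$. $\psi$ is extended to words $(f_{i_1},\delta_1)\cdots(f_{i_m},\delta_m)$ by $\psi(f_{i_1}\cdots f_{i_m})$. For a $k$-decision tree $\Gamma$, $\psi(\Gamma)=\max_\tau\psi(\pi(\tau))$ over complete paths. For $T\ne\Lambda$, $\psi^d(T)$ (resp. $\psi^a(T)$) is the minimum of $\psi(\Gamma)$ over deterministic (resp. nondeterministic) decision trees $\Gamma$ for $T$; $\psi^d(\Lambda)=\psi^a(\Lambda)=0$. $\mathcal H^\infty_{\psi,A}(n)$ is undefined if the set $\{\psi^d(T):T\in A,\ \psi^a(T)\le n\}$ is infinite, and otherwise equals its maximum; it is everywhere defined if defined for all $n\in\omega$. *)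

From mathcomp Require Import all_boot.
Set Implicit Arguments. Unset Strict Implicit. Unset Printing Implicit Defensive.

(* Attributes f_i are identified with their index i : nat.
   A decision set (element of P(omega)) is represented canonically as a
   nonempty strictly increasing list of naturals. *)
Definition dec_set (s : seq nat) : bool := (s != [::]) && sorted ltn s.

(* A decision table: list of column attributes, list of rows; each row is
   (values, decision set). Row order matters (I keeps the first row). *)
Record table := Table { tcols : seq nat; trows : seq (seq nat * seq nat) }.

Definition Lambda : table := Table [::] [::].

Definition wf_table (k : nat) (T : table) : Prop :=
  uniq (tcols T) /\
  (tcols T = [::] <-> trows T = [::]) /\
  uniq (map fst (trows T)) /\
  (forall r, r \in trows T ->
     size r.1 = size (tcols T) /\ all (fun v => v < k) r.1 /\ dec_set r.2).

Definition rval (T : table) (r : seq nat) (f : nat) : nat :=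
  nth 0 r (index f (tcols T)).

Definition row_sat (T : table) (alpha : seq (nat * nat)) (r : seq nat) : bool :=
  all (fun p => rval T r p.1 == p.2) alpha.

Definition subtable (T : table) (alpha : seq (nat * nat)) : table :=
  let rs := filter (fun r => row_sat T alpha r.1) (trows T) in
  if rs is [::] then Lambda else Table (tcols T) rs.

Definition in_Pi (T : table) (d : nat) : bool :=
  all (fun r => d \in r.2) (trows T).

Definition keep_first (s : seq (seq nat * seq nat)) : seq (seq nat * seq nat) :=
  foldl (fun acc x => if x.1 \in map fst acc then acc else rcons acc x) [::] s.

Definition Iop (D : seq nat) (T : table) : table :=
  if all (fun f => f \in D) (tcols T) then Lambda else
  let nc := filter (fun f => f \notin D) (tcols T) in
  Table nc (keep_first
    [seq ([seq rval T r.1 f | f <- nc], r.2) | r <- trows T]).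

Definition Jop (nu : seq nat -> seq nat) (T : table) : table :=
  Table (tcols T) [seq (r.1, nu r.1) | r <- trows T].

Definition in_closure (T T' : table) : Prop :=
  exists (D : seq nat) (nu : seq nat -> seq nat),
    all (fun f => f \in tcols T) D /\ (forall x, dec_set (nu x)) /\
    T' = Jop nu (Iop D T).

Definition closed_class (k : nat) (A : table -> Prop) : Prop :=
  (exists T, A T) /\ (forall T, A T -> wf_table k T) /\
  (forall T', (exists T, A T /\ in_closure T T') <-> A T').

(* Non-root nodes: terminal nodes labeled with a decision, other nodes labeled
   with an attribute and outgoing edges labeled with numbers. *)
Inductive node := Leaf of nat | Node of nat & seq (nat * node).

(* A k-decision tree: an unlabeled root with a list of (unlabeled) edges to
   subtrees. *)
Record dtree := DTree { droots : seq node }.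

Fixpoint node_wf (k : nat) (t : node) : bool :=
  match t with
  | Leaf _ => true
  | Node _ ch => (size ch > 0) && all (fun p => p.1 < k) ch &&
                 all (fun p => node_wf k p.2) ch
  end.

Definition dtree_wf (k : nat) (G : dtree) : bool :=
  (size (droots G) > 0) && all (node_wf k) (droots G).

Fixpoint node_det (t : node) : bool :=
  match t with
  | Leaf _ => true
  | Node _ ch => uniq (map fst ch) && all (fun p => node_det p.2) ch
  end.

Fixpoint node_atts (t : node) : seq nat :=
  match t with
  | Leaf _ => [::]
  | Node f ch => f :: flatten (map (fun p => node_atts p.2) ch)
  end.

Definition dtree_atts (G : dtree) : seq nat := flatten (map node_atts (droots G)).

Fixpoint node_paths (t : node) : seq (seq (nat * nat) * nat) :=
  match t with
  | Leaf d => [:: ([::], d)]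
  | Node f ch =>
      flatten (map (fun p => map (fun wd => ((f, p.1) :: wd.1, wd.2))
                                 (node_paths p.2)) ch)
  end.

(* complete paths tau of G, as pairs (pi(tau), decision at terminal node) *)
Definition dtree_paths (G : dtree) : seq (seq (nat * nat) * nat) :=
  flatten (map node_paths (droots G)).

Definition nondet_tree (k : nat) (G : dtree) (T : table) : Prop :=
  T <> Lambda /\ dtree_wf k G /\
  all (fun f => f \in tcols T) (dtree_atts G) /\
  (forall r, r \in trows T ->
     exists2 tau, tau \in dtree_paths G & r \in trows (subtable T tau.1)) /\
  (forall tau, tau \in dtree_paths G ->
     subtable T tau.1 = Lambda \/ in_Pi (subtable T tau.1) tau.2).

Definition det_tree (k : nat) (G : dtree) (T : table) : Prop :=
  nondet_tree k G T /\ size (droots G) = 1 /\ all node_det (droots G).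

Definition partially_bounded_measure (psi : seq nat -> nat) : Prop :=
  (forall a, psi a = 0 <-> a = [::]) /\
  (forall a b, perm_eq a b -> psi a = psi b) /\
  (forall a b, psi a <= psi (a ++ b)) /\
  (forall a b, psi (a ++ b) <= psi a + psi b).

Definition bounded_measure (psi : seq nat -> nat) : Prop :=
  partially_bounded_measure psi /\ (forall a, size a <= psi a).

Definition psi_tree (psi : seq nat -> nat) (G : dtree) : nat :=
  \max_(tau <- dtree_paths G) psi (map fst tau.1).

Definition is_psi_d (k : nat) (psi : seq nat -> nat) (T : table) (m : nat) : Prop :=
  (T = Lambda /\ m = 0) \/
  (T <> Lambda /\ (exists G, det_tree k G T /\ psi_tree psi G = m) /\
   (forall G, det_tree k G T -> m <= psi_tree psi G)).

Definition is_psi_a (k : nat) (psi : seq nat -> nat) (T : table) (m : nat) : Prop :=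
  (T = Lambda /\ m = 0) \/
  (T <> Lambda /\ (exists G, nondet_tree k G T /\ psi_tree psi G = m) /\
   (forall G, nondet_tree k G T -> m <= psi_tree psi G)).

Definition H_set (k : nat) (psi : seq nat -> nat) (A : table -> Prop) (n m : nat)
  : Prop :=
  exists T, A T /\ (exists a, is_psi_a k psi T a /\ a <= n) /\ is_psi_d k psi T m.

(* H^infty_{psi,A}(n) is defined (the set is finite, i.e. bounded in nat) *)
Definition H_defined (k : nat) (psi : seq nat -> nat) (A : table -> Prop) (n : nat)
  : Prop := exists b, forall m, H_set k psi A n m -> m <= b.

Definition H_value (k : nat) (psi : seq nat -> nat) (A : table -> Prop) (n h : nat)
  : Prop :=
  H_defined k psi A n /\ H_set k psi A n h /\
  (forall m, H_set k psi A n m -> m <= h).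

Definition H_everywhere_defined (k : nat) (psi : seq nat -> nat)
  (A : table -> Prop) : Prop := forall n, H_defined k psi A n.

From mathcomp Require Import all_boot zify.
From Stdlib Require Import Classical.
From Stdlib Require List.
Set Implicit Arguments. Unset Strict Implicit. Unset Printing Implicit Defensive.

(* Attribute [wattr n j] has weight [n], and the complexity of a word is the
   sum of the weights of its letters.  With [w := width phi n], the unit table
   of weight [n] has [w] columns of weight [n], its row [j] has a single [1], in
   column [j], and decision set [{j}].  Guessing the row and checking its
   column is a nondeterministic tree of complexity [n], while an adversary
   answering [0] to every query forces a deterministic tree to ask [w - 1]
   columns, i.e. to have complexity [n (w - 1) >= phi n].
   Conversely, a table derived from a unit table of weight [n0] either has a
   common decision or needs nondeterministic complexity [n0], and it is solved
   deterministically by asking at most [w - 1] of its columns (when no column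
   was deleted, the row sum [1] determines the last one), at cost
   [n0 (w - 1) <= phi n0 + n0 - 1 <= phi n + n] whenever [n0 <= n]. *)


Lemma ex_minimal (P : nat -> Prop) :
  (exists n, P n) -> exists m, P m /\ forall n, P n -> m <= n.
Proof.
move=> [n Pn]; elim/ltn_ind: n Pn => n IH Pn.
have [[m [ltmn Pm]]|no_smaller] := classic (exists m, m < n /\ P m).
  exact: IH ltmn Pm.
exists n; split => // m Pm; rewrite leqNgt; apply/negP => ltmn.
by apply: no_smaller; exists m.
Qed.

Lemma ex_maximal (P : nat -> Prop) (b : nat) :
  (exists n, P n) -> (forall n, P n -> n <= b) ->
  exists m, P m /\ forall n, P n -> n <= m.
Proof.
elim: b => [|b IH] exP ub.
  have [n Pn] := exP; have := ub n Pn; rewrite leqn0 => /eqP n0.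
  by exists 0; split => [|m /ub]; rewrite -?n0.
have [Pb1|nPb1] := classic (P b.+1); first by exists b.+1.
apply: (IH exP) => n Pn; have := ub n Pn; rewrite leq_eqVlt => /predU1P [en|//].
by rewrite en in Pn.
Qed.

Lemma In_memE (T : eqType) (s : seq T) x : List.In x s <-> x \in s.
Proof.
elim: s => [|y s IH] //=; rewrite in_cons; split.
  by case=> [->|/IH ->]; rewrite ?eqxx ?orbT.
by case/orP => [/eqP ->|/IH]; auto.
Qed.

Lemma mem_flatten_map (A : Type) (B : eqType) (F : A -> seq B) (s : seq A) y :
  y \in flatten (map F s) <-> exists a, List.In a s /\ y \in F a.
Proof.
elim: s => [|a s IH] /=; first by split => // -[? []].
rewrite mem_cat; split.
  by case/orP => [yFa|/IH [b [sb yFb]]]; [exists a | exists b]; auto.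
move=> [b [[<-|sb] yFb]]; first by rewrite yFb.
by apply/orP; right; apply/IH; exists b.
Qed.

Lemma all_In (A : Type) (P : pred A) s a : all P s -> List.In a s -> P a.
Proof. by elim: s => //= b s IH /andP [Pb Ps] [<-|]; auto. Qed.

Lemma In_map_fst (A : eqType) (B : Type) (s : seq (A * B)) a b :
  List.In (a, b) s -> a \in map fst s.
Proof.
by elim: s => //= -[x y] s IH [[-> _]|/IH sa]; rewrite in_cons ?eqxx ?sa ?orbT.
Qed.

Lemma uniq_fst_In (A : eqType) (B : Type) (s : seq (A * B)) a b b' :
  uniq (map fst s) -> List.In (a, b) s -> List.In (a, b') s -> b = b'.
Proof.
elim: s => //= -[x y] s IH /andP [xs us] [[ex ey]|sb] [[ex' ey']|sb'].
- by rewrite -ey -ey'.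
- by rewrite ex (In_map_fst sb') in xs.
- by rewrite ex' (In_map_fst sb) in xs.
- exact: IH.
Qed.

Lemma sumn_filter_le (A : Type) (g : A -> nat) (P : pred A) s :
  sumn (map g (filter P s)) <= sumn (map g s).
Proof. by elim: s => //= a s IH; case: (P a) => /=; lia. Qed.

(* The children of a [Node] form a list, so the generated induction principle
   of [node] gives no induction hypothesis for them. *)
Fixpoint node_nested_ind (P : node -> Prop) (HL : forall d, P (Leaf d))
  (HN : forall f ch, (forall v c, List.In (v, c) ch -> P c) -> P (Node f ch))
  (t : node) : P t :=
  match t with
  | Leaf d => HL d
  | Node f ch => HN f ch ((fix children (s : seq (nat * node)) :
        forall v c, List.In (v, c) s -> P c :=
       match s with
       | [::] => fun v c H => match H with end
       | (v0, c0) :: s' => fun v c H => match H with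
           | or_introl e => eq_ind c0 P (node_nested_ind HL HN c0) c (f_equal snd e)
           | or_intror H' => children s' v c H' end
       end) ch)
  end.

Lemma mem_node_paths_Node f ch w :
  w \in node_paths (Node f ch) <->
  exists v c w', [/\ List.In (v, c) ch, w' \in node_paths c & w = ((f, v) :: w'.1, w'.2)].
Proof.
rewrite /= mem_flatten_map; split.
  by move=> [[v c] [chvc /mapP [w' cw' ->]]]; exists v, c, w'.
move=> [v [c [w' [chvc cw' ->]]]]; exists (v, c); split => //.
by apply/mapP; exists w'.
Qed.

Lemma exists_node_path k t : node_wf k t -> exists w, w \in node_paths t.
Proof.
elim/node_nested_ind: t => [d|f [|[v c] ch] IH] //=; first by exists ([::], d); rewrite inE.
move=> /andP [_ /andP [wf_c _]]; have [w cw] := IH v c (or_introl erefl) wf_c.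
by exists ((f, v) :: w.1, w.2); rewrite mem_cat; apply/orP; left; apply/mapP; exists w.
Qed.

Lemma node_path_atts t w : w \in node_paths t -> {subset map fst w.1 <= node_atts t}.
Proof.
elim/node_nested_ind: t w => [d|f ch IH] w; first by rewrite inE => /eqP ->.
move/mem_node_paths_Node => [v [c [w' [chvc cw' ->]]]] x.
rewrite /= !in_cons => /orP [->//|xw']; apply/orP; right.
apply/(mem_flatten_map (fun p => node_atts p.2)); exists (v, c); split => //.
exact: IH chvc _ cw' _ xw'.
Qed.

Lemma dtree_path_atts G tau : tau \in dtree_paths G -> {subset map fst tau.1 <= dtree_atts G}.
Proof.
move=> /(mem_flatten_map node_paths) [t [Gt tau_t]] x x_tau.
by apply/(mem_flatten_map node_atts); exists t; split; last exact: node_path_atts x_tau.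
Qed.

Lemma dtree_paths1 t : dtree_paths (DTree [:: t]) = node_paths t.
Proof. by rewrite /dtree_paths /= cats0. Qed.

Lemma trows_subtable T w :
  trows (subtable T w) = filter (fun r => row_sat T w r.1) (trows T).
Proof. by rewrite /subtable; case: (filter _ _). Qed.

Lemma subtable_Lambda T w :
  subtable T w = Lambda <-> filter (fun r => row_sat T w r.1) (trows T) = [::].
Proof. by rewrite /subtable; case: (filter _ _). Qed.

Lemma in_Pi_subtable T w d :
  in_Pi (subtable T w) d =
  all (fun r => d \in r.2) (filter (fun r => row_sat T w r.1) (trows T)).
Proof. by rewrite /in_Pi trows_subtable. Qed.

Lemma row_sat_cat T p q r : row_sat T (p ++ q) r = row_sat T p r && row_sat T q r.
Proof. by rewrite /row_sat all_cat. Qed.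

Lemma subtable_decided T w d :
  (forall r, r \in trows T -> row_sat T w r.1 -> d \in r.2) ->
  subtable T w = Lambda \/ in_Pi (subtable T w) d.
Proof.
move=> dec_w; right; rewrite in_Pi_subtable; apply/allP => r.
by rewrite mem_filter => /andP [rw Tr]; exact: dec_w.
Qed.

Lemma rval_lt k T r c :
  wf_table k T -> r \in trows T -> c \in tcols T -> rval T r.1 c < k.
Proof.
move=> [_ [_ [_ wf_rows]]] Tr Tc; have [size_r [r_lt _]] := wf_rows r Tr.
have ltc : index c (tcols T) < size r.1 by rewrite size_r index_mem.
by move/allP: r_lt; apply; apply: mem_nth.
Qed.

Lemma map_rval T r : size r = size (tcols T) -> uniq (tcols T) ->
  map (rval T r) (tcols T) = r.
Proof.
move=> size_r uniq_cols; rewrite /rval.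
rewrite -[in RHS](mkseq_nth 0 r) -[in X in map _ X = _](mkseq_nth 0 (tcols T)).
rewrite /mkseq -map_comp size_r.
by apply/eq_in_map => i; rewrite mem_iota /= => lti; rewrite index_uniq.
Qed.

Lemma trows_nonempty k T : wf_table k T -> T <> Lambda -> trows T <> [::].
Proof.
case: T => cs rs [_ [cols_rows _]] /= nLambda rs0; apply: nLambda; subst rs.
by move: (proj2 cols_rows erefl) => /= ->.
Qed.

Definition separating (T : table) (cs : seq nat) :=
  forall r1 r2, r1 \in trows T -> r2 \in trows T ->
  (forall c, c \in cs -> rval T r1.1 c = rval T r2.1 c) -> r1 = r2.

Lemma separating_tcols k T : wf_table k T -> separating T (tcols T).
Proof.
move=> [uniq_cols [_ [uniq_rows wf_rows]]] r1 r2 Tr1 Tr2 eq_vals.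
have e : r1.1 = r2.1.
  rewrite -(map_rval (proj1 (wf_rows _ Tr1)) uniq_cols).
  by rewrite -(map_rval (proj1 (wf_rows _ Tr2)) uniq_cols); apply/eq_in_map.
move: uniq_rows Tr1 Tr2 e; elim: (trows T) => //= a s IH /andP [as_ us].
rewrite !in_cons => /orP [/eqP->|Tr1] /orP [/eqP->|Tr2] e //.
- by move: as_; rewrite e (map_f fst Tr2).
- by move: as_; rewrite -e (map_f fst Tr1).
- exact: IH.
Qed.

Lemma det_tree_Leaf k T d : T <> Lambda -> in_Pi T d -> det_tree k (DTree [:: Leaf d]) T.
Proof.
move=> nLambda Pi_d; split => //; split => //; split => //; split => //; split.
  move=> r Tr; exists ([::], d); first by rewrite dtree_paths1 inE.
  by rewrite trows_subtable mem_filter Tr.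
move=> tau; rewrite dtree_paths1 inE => /eqP -> /=.
by apply: subtable_decided => r Tr _; move/allP: Pi_d; apply.
Qed.

Lemma psi_tree_Leaf psi d : psi_tree psi (DTree [:: Leaf d]) = psi [::].
Proof. by rewrite /psi_tree dtree_paths1 /= big_cons big_nil maxn0. Qed.

Lemma nondet_tree_nonempty_path k T G : wf_table k T -> T <> Lambda ->
  ~ (exists d, in_Pi T d) -> nondet_tree k G T ->
  exists tau x w, tau \in dtree_paths G /\ tau.1 = x :: w.
Proof.
move=> wfT nLambda no_common [_ [_ [_ [G_covers G_decides]]]].
have := trows_nonempty wfT nLambda; case rowsT: (trows T) => [|r rs] // _.
have Tr : r \in trows T by rewrite rowsT mem_head.
have [tau G_tau Ttau_r] := G_covers r Tr.
case tau_word: tau.1 => [|x w]; last by exists tau, x, w.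
case: (G_decides _ G_tau); rewrite tau_word.
  by rewrite trows_subtable tau_word in Ttau_r => /subtable_Lambda e; rewrite e in Ttau_r.
rewrite in_Pi_subtable => Pi_tau; case: no_common; exists tau.2.
by rewrite /in_Pi -(filter_predT (trows T)) -(eq_filter (a1 := fun r => row_sat T [::] r.1)).
Qed.

(* [t], reached after the answers [p], is a correct decision tree for [T p]. *)
Definition subtree_for (T : table) (t : node) (p : seq (nat * nat)) : Prop :=
  (forall r, r \in trows T -> row_sat T p r.1 ->
     exists2 w, w \in node_paths t & row_sat T (p ++ w.1) r.1) /\
  (forall w, w \in node_paths t ->
     subtable T (p ++ w.1) = Lambda \/ in_Pi (subtable T (p ++ w.1)) w.2).

Lemma subtree_for_root k T t : det_tree k (DTree [:: t]) T -> subtree_for T t [::].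
Proof.
move=> [[_ [_ [_ [covers decides]]]] _]; rewrite dtree_paths1 in covers decides.
split=> [r Tr _|//]; have [w tw Tw_r] := covers r Tr; exists w => //.
by move: Tw_r; rewrite trows_subtable mem_filter => /andP [].
Qed.

Lemma subtree_for_child_exists T f ch p r v :
  subtree_for T (Node f ch) p -> r \in trows T -> row_sat T p r.1 -> rval T r.1 f = v ->
  exists c, List.In (v, c) ch.
Proof.
move=> [covers _] Tr p_r r_f.
have [w /mem_node_paths_Node [v' [c [w' [ch_c _ ->]]]]] := covers r Tr p_r.
by rewrite row_sat_cat /row_sat /= r_f => /andP [_ /andP [/eqP -> _]]; exists c.
Qed.

Lemma subtree_for_child T f ch p v c : uniq (map fst ch) ->
  subtree_for T (Node f ch) p -> List.In (v, c) ch -> subtree_for T c (p ++ [:: (f, v)]).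
Proof.
move=> uniq_ch [covers decides] ch_c; split=> [r Tr|w cw].
  rewrite row_sat_cat => /andP [p_r f_r].
  have r_f : rval T r.1 f = v by move: f_r; rewrite /row_sat /= andbT => /eqP.
  have [w2 tw2 w2_r] := covers r Tr p_r.
  move: tw2 w2_r => /mem_node_paths_Node [v2 [c2 [w3 [ch_c2 c2w3 ->]]]].
  rewrite row_sat_cat => /andP [_]; rewrite {1}/row_sat /= r_f => /andP [/eqP vv2 w3_r].
  rewrite vv2 in ch_c; rewrite (uniq_fst_In uniq_ch ch_c2 ch_c) in c2w3.
  exists w3 => //; rewrite -catA row_sat_cat p_r /=.
  by rewrite /row_sat /= r_f eqxx.
rewrite -catA; apply: (decides ((f, v) :: w.1, w.2)).
by apply/mem_node_paths_Node; exists v, c, w.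
Qed.

Fixpoint query_tree (k : nat) (cs : seq nat) (pre : seq (nat * nat))
    (dec : seq (nat * nat) -> nat) : node :=
  match cs with
  | [::] => Leaf (dec pre)
  | c :: cs' =>
      Node c [seq (x, query_tree k cs' (pre ++ [:: (c, x)]) dec) | x <- iota 0 k]
  end.

Section QueryTree.
Variables (k : nat) (dec : seq (nat * nat) -> nat).

Lemma query_tree_wf cs pre : 0 < k -> node_wf k (query_tree k cs pre dec).
Proof.
move=> k_gt0; elim: cs pre => [|c cs IH] pre //=.
rewrite size_map size_iota k_gt0 !all_map /=.
by apply/andP; split; apply/allP => x //=; rewrite mem_iota.
Qed.

Lemma query_tree_det cs pre : node_det (query_tree k cs pre dec).
Proof.
elim: cs pre => [|c cs IH] pre //=.
by rewrite -map_comp /= map_id iota_uniq all_map; apply/allP => x _ /=.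
Qed.

Lemma query_tree_atts cs pre : {subset node_atts (query_tree k cs pre dec) <= cs}.
Proof.
elim: cs pre => [|c cs IH] pre f //=.
rewrite !in_cons => /orP [->//|].
move/(mem_flatten_map (fun p => node_atts p.2)) => [[x t] [/List.in_map_iff [y [[_ <-] _]]]].
by move/IH => ->; rewrite orbT.
Qed.

Lemma query_tree_paths cs pre tau : tau \in node_paths (query_tree k cs pre dec) ->
  map fst tau.1 = cs /\ tau.2 = dec (pre ++ tau.1).
Proof.
elim: cs pre tau => [|c cs IH] pre tau; first by rewrite inE => /eqP -> /=; rewrite cats0.
move/mem_node_paths_Node => [v [t [w' [/List.in_map_iff [y [[<- <-] _]] tw' ->]]]].
by have [cs_w' dec_w'] := IH _ _ tw'; rewrite /= cs_w' dec_w'; split; last by rewrite -catA.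
Qed.

Lemma query_tree_path_of cs pre (val : nat -> nat) :
  (forall c, c \in cs -> val c < k) ->
  let w := [seq (c, val c) | c <- cs] in
  (w, dec (pre ++ w)) \in node_paths (query_tree k cs pre dec).
Proof.
elim: cs pre => [|c cs IH] pre val_lt /=; first by rewrite cats0 inE.
set w := [seq (c', val c') | c' <- cs].
apply/mem_node_paths_Node; exists (val c), (query_tree k cs (pre ++ [:: (c, val c)]) dec).
exists (w, dec ((pre ++ [:: (c, val c)]) ++ w)); split; last by rewrite /= -catA.
- apply/List.in_map_iff; exists (val c); split => //; apply/In_memE.
  by rewrite mem_iota add0n val_lt ?mem_head.
- by apply: IH => c' cs_c'; apply: val_lt; rewrite in_cons cs_c' orbT.
Qed.

Lemma psi_tree_query_tree psi cs pre :
  psi_tree psi (DTree [:: query_tree k cs pre dec]) <= psi cs.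
Proof.
rewrite /psi_tree dtree_paths1; apply/bigmax_leqP_seq => tau.
by move=> /query_tree_paths [-> _].
Qed.

End QueryTree.

(* The least decision of the first row of [T w] (junk [0] when [T w] has no rows). *)
Definition first_decision (T : table) (w : seq (nat * nat)) : nat :=
  head 0 (head ([::], [::]) (filter (fun r => row_sat T w r.1) (trows T))).2.

Lemma det_tree_query_tree k T cs : 0 < k -> T <> Lambda -> wf_table k T ->
  {subset cs <= tcols T} -> separating T cs ->
  det_tree k (DTree [:: query_tree k cs [::] (first_decision T)]) T.
Proof.
move=> k_gt0 nLambda wfT cs_cols sep_cs.
split; last by rewrite /= query_tree_det.
split => //; split; first by rewrite /dtree_wf /= query_tree_wf.
split.
  by apply/allP => f; rewrite /dtree_atts /= cats0 => /query_tree_atts; exact: cs_cols.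
split.
  move=> r Tr; eexists.
    rewrite dtree_paths1; apply: (@query_tree_path_of k _ cs [::] (rval T r.1)) => c cs_c.
    exact: rval_lt wfT Tr (cs_cols _ cs_c).
  by rewrite trows_subtable mem_filter Tr andbT /row_sat all_map; apply/allP => c _ /=.
move=> tau; rewrite dtree_paths1 => /query_tree_paths [tau_cs tau_dec].
case rows_tau: (filter (fun r => row_sat T tau.1 r.1) (trows T)) => [|r0 F].
  by left; apply/subtable_Lambda.
have : r0 \in filter (fun r => row_sat T tau.1 r.1) (trows T) by rewrite rows_tau mem_head.
rewrite mem_filter => /andP [tau_r0 Tr0].
apply: subtable_decided => r Tr tau_r.
have -> : r = r0.
  apply: sep_cs => // c; rewrite -tau_cs => /mapP [[c' v] tau_cv /= ->].
  by move/allP: tau_r => /(_ _ tau_cv) /eqP ->; move/allP: tau_r0 => /(_ _ tau_cv) /eqP ->.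
rewrite tau_dec /first_decision /= rows_tau /=.
have [_ [_ [_ wf_rows]]] := wfT; have [_ [_ ]] := wf_rows r0 Tr0.
by rewrite /dec_set; case: (r0.2) => //= a s _; rewrite mem_head.
Qed.

Definition keep_first_step (acc : seq (seq nat * seq nat)) (x : seq nat * seq nat) :=
  if x.1 \in map fst acc then acc else rcons acc x.

Lemma keep_firstE s : keep_first s = foldl keep_first_step [::] s.
Proof. by []. Qed.

Section KeepFirst.
Implicit Types acc s : seq (seq nat * seq nat).

Lemma uniq_foldl_keep_first_step s acc :
  uniq (map fst acc) -> uniq (map fst (foldl keep_first_step acc s)).
Proof.
elim: s acc => //= x s IH acc uniq_acc; apply: IH; rewrite /keep_first_step.
by case: ifP => // x_acc; rewrite map_rcons rcons_uniq x_acc.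
Qed.

Lemma mem_foldl_keep_first_step s acc y :
  y \in foldl keep_first_step acc s -> y \in acc \/ y \in s.
Proof.
elim: s acc => /= [|x s IH] acc; first by left.
move/IH; rewrite /keep_first_step in_cons => -[|ys]; last by right; rewrite ys orbT.
by case: ifP => _ y_acc; [left | move: y_acc; rewrite mem_rcons in_cons => /orP [->|->]; auto].
Qed.

Lemma size_foldl_keep_first_step s acc : size acc <= size (foldl keep_first_step acc s).
Proof.
elim: s acc => //= y s IH acc; apply: leq_trans (IH _).
by rewrite /keep_first_step; case: ifP => // _; rewrite size_rcons.
Qed.

Lemma foldl_keep_first_step_id s acc :
  uniq (map fst (acc ++ s)) -> foldl keep_first_step acc s = acc ++ s.
Proof.
elim: s acc => /= [|x s IH] acc uniq_acc_s; first by rewrite cats0.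
have : x.1 \notin map fst acc.
  by move: uniq_acc_s; rewrite map_cat cat_uniq /= => /and3P [_ /norP []].
by rewrite /keep_first_step => /negbTE ->; rewrite IH cat_rcons.
Qed.

Lemma uniq_keep_first s : uniq (map fst (keep_first s)).
Proof. exact: uniq_foldl_keep_first_step. Qed.

Lemma keep_first_subset s : {subset keep_first s <= s}.
Proof. by move=> y /mem_foldl_keep_first_step []. Qed.

Lemma keep_first_nil s : (keep_first s == [::]) = (s == [::]).
Proof.
case: s => // x s; rewrite keep_firstE /= {1}/keep_first_step /=.
by have := size_foldl_keep_first_step s [:: x]; case: (foldl _ _ _).
Qed.

Lemma keep_first_id s : uniq (map fst s) -> keep_first s = s.
Proof. by move=> uniq_s; rewrite keep_firstE foldl_keep_first_step_id. Qed.

End KeepFirst.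

Lemma wf_table_Jop k nu T :
  (forall x, dec_set (nu x)) -> wf_table k T -> wf_table k (Jop nu T).
Proof.
move=> dec_nu [uniq_cols [cols_rows [uniq_rows wf_rows]]].
split => //=; split; first by rewrite cols_rows; case: (trows T).
split; first by rewrite -map_comp.
by move=> r' /mapP [r Tr ->] /=; have [? [? _]] := wf_rows r Tr.
Qed.

Lemma tcols_Iop D T : tcols (Iop D T) = filter (fun f => f \notin D) (tcols T).
Proof.
rewrite /Iop; case: ifP => //= /allP all_D.
by apply/esym/eqP; rewrite -[_ == _]negbK -has_filter; apply/hasPn => f /all_D ->.
Qed.

Lemma trows_Iop D T :
  {subset trows (Iop D T) <=
   [seq (map (rval T r.1) (filter (fun f => f \notin D) (tcols T)), r.2) | r <- trows T]}.
Proof. by rewrite /Iop; case: ifP => // _ r' /keep_first_subset. Qed.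

Lemma wf_table_Iop k D T : wf_table k T -> wf_table k (Iop D T).
Proof.
move=> wfT; have [uniq_cols [cols_rows [_ wf_rows]]] := wfT.
rewrite /Iop; case: ifP => [_|not_all_D]; first by do !split.
set nc := filter _ _; set L := map _ _.
have nc_nil : nc != [::].
  by rewrite -has_filter; move/negbT: not_all_D => /allPn [f Tf fD]; apply/hasP; exists f.
have rows_nil : keep_first L != [::].
  have : tcols T != [::] by apply: contraNneq nc_nil => cols0; rewrite /nc cols0.
  by rewrite keep_first_nil /L; case: (trows T) cols_rows => // [[_ /(_ erefl)]] ->.
split; first exact: filter_uniq.
split; first by split => /= e; [rewrite e in nc_nil | rewrite e in rows_nil].
split; first exact: uniq_keep_first.
move=> r' /keep_first_subset /mapP [r Tr ->] /=; rewrite size_map.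
have [_ [_ dec_r]] := wf_rows r Tr; split; [by [] | split => //].
apply/allP => v /mapP [c nc_c ->]; apply: rval_lt wfT Tr _.
by move: nc_c; rewrite mem_filter => /andP [].
Qed.

Lemma nth_snd_index (s : seq (seq nat * seq nat)) r d :
  uniq (map fst s) -> r \in s -> nth d (map snd s) (index r.1 (map fst s)) = r.2.
Proof.
elim: s => //= a s IH /andP [a_s uniq_s]; rewrite in_cons => /orP [/eqP ->|sr].
  by rewrite eqxx.
by case: eqP => [e|_]; [move: a_s; rewrite e (map_f fst sr) | exact: IH].
Qed.

Lemma table_eta T : T = Table (tcols T) (trows T).
Proof. by case: T. Qed.

Lemma in_closure_refl k T : wf_table k T -> in_closure T T.
Proof.
move=> [uniq_cols [cols_rows [uniq_rows wf_rows]]].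
pose nu x := nth [:: 0] (map snd (trows T)) (index x (map fst (trows T))).
exists [::], nu; split => //; split.
  move=> x; rewrite /nu; case: (ltnP (index x (map fst (trows T))) (size (map snd (trows T)))).
    by move/(mem_nth [:: 0]) => /mapP [r Tr ->]; have [_ [_]] := wf_rows r Tr.
  by move=> ?; rewrite nth_default.
rewrite /Iop; case: ifP => [|_].
  move=> all_nil; change (T = Lambda); clear nu.
  by case: T all_nil cols_rows {uniq_cols uniq_rows wf_rows} => [[|??] rs] //= _ [/(_ erefl) -> _].
rewrite (@eq_filter _ _ predT) // filter_predT.
have -> : [seq (map (rval T r.1) (tcols T), r.2) | r <- trows T] = trows T.
  rewrite -[RHS]map_id; apply/eq_in_map => -[x y] Tr /=.
  by rewrite map_rval ?(proj1 (wf_rows _ Tr)).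
rewrite keep_first_id // {1}[T]table_eta /Jop /=.
congr Table; rewrite -[LHS]map_id; apply/eq_in_map => -[x y] Txy /=.
by rewrite /nu (nth_snd_index _ uniq_rows Txy).
Qed.

Definition weight (f : nat) : nat := maxn 1 (logn 2 f).

Definition weight_measure (s : seq nat) : nat := sumn (map weight s).

(* [2 ^ n * (2 j + 1)] has [2]-adic valuation [n]. *)
Definition wattr (n j : nat) : nat := 2 ^ n * j.*2.+1.

Lemma weight_wattr n j : 0 < n -> weight (wattr n j) = n.
Proof.
move=> n_gt0; rewrite /weight /wattr mulnC logn_Gauss ?pfactorK //; first lia.
by rewrite coprime2n /= odd_double.
Qed.

Lemma wattr_inj n : injective (wattr n).
Proof. by move=> i j /eqP; rewrite /wattr eqn_pmul2l ?expn_gt0 // => /eqP []; lia. Qed.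

Lemma weight_measure_bounded : bounded_measure weight_measure.
Proof.
have weight_gt0 f : 0 < weight f by rewrite /weight; lia.
split; last by elim=> //= f s; rewrite /weight_measure /=; have := weight_gt0 f; lia.
split; [|split; [|split]].
- move=> [|f s]; split => //=; rewrite /weight_measure /=; have := weight_gt0 f; lia.
- by move=> a b perm_ab; apply/perm_sumn/perm_map.
- by move=> a b; rewrite /weight_measure map_cat sumn_cat leq_addr.
- by move=> a b; rewrite /weight_measure map_cat sumn_cat.
Qed.

Lemma weight_measure_const s n :
  (forall f, f \in s -> weight f = n) -> weight_measure s = n * size s.
Proof.
rewrite /weight_measure; elim: s => [|f s IH] weight_s /=; first by rewrite muln0.
rewrite IH => [|g sg]; last by apply: weight_s; rewrite in_cons sg orbT.
by rewrite weight_s ?mem_head // mulnS.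
Qed.

(* [width phi n] is chosen so that [n * (width phi n).-1] is the least multiple
   of [n] that is at least [phi n]. *)
Definition width (phi : nat -> nat) (n : nat) : nat := (phi n + n - 1) %/ n + 1.

Definition wcols phi n : seq nat := map (wattr n) (iota 0 (width phi n)).

Definition weight_class phi n (T : table) : Prop :=
  {subset tcols T <= wcols phi n} /\
  forall r, r \in trows T ->
    sumn r.1 <= 1 /\ (size (tcols T) = width phi n -> sumn r.1 = 1).

Definition unit_class k phi (T : table) : Prop :=
  wf_table k T /\ exists2 n, 0 < n & weight_class phi n T.

Lemma width_bounds phi n : 0 < n -> n <= phi n ->
  [/\ 2 <= width phi n, phi n <= n * (width phi n).-1
    & n * (width phi n).-1 <= phi n + n - 1].
Proof.
move=> n_gt0 n_le; rewrite /width addn1 /= mulnC.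
have := divn_eq (phi n + n - 1) n; have := ltn_pmod (phi n + n - 1) n_gt0.
move: ((phi n + n - 1) %/ n) ((phi n + n - 1) %% n) => q r lt_r e.
have q_gt0 : 0 < q by case: q e => [|q] //; lia.
split; lia.
Qed.

Lemma mem_wcols phi n c : c \in wcols phi n -> exists2 i, i < width phi n & c = wattr n i.
Proof. by move/mapP => [i]; rewrite mem_iota => /andP [_ ?] ->; exists i. Qed.

Lemma weight_wcols phi n c : 0 < n -> c \in wcols phi n -> weight c = n.
Proof. by move=> n_gt0 /mem_wcols [i _ ->]; rewrite weight_wattr. Qed.

Lemma size_tcols_weight_class k phi n T :
  wf_table k T -> weight_class phi n T -> size (tcols T) <= width phi n.
Proof.
move=> [uniq_cols _] [cols_w _].
by have := uniq_leq_size uniq_cols cols_w; rewrite size_map size_iota.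
Qed.

Lemma weight_class_Jop phi n nu T : weight_class phi n T -> weight_class phi n (Jop nu T).
Proof.
by move=> [cols_w rows_w]; split => // r'; rewrite /Jop /= => /mapP [r Tr ->]; exact: (rows_w r Tr).
Qed.

Lemma weight_class_Iop k phi n D T :
  wf_table k T -> weight_class phi n T -> weight_class phi n (Iop D T).
Proof.
move=> wfT [cols_w rows_w]; rewrite /weight_class tcols_Iop.
split=> [c|r' /trows_Iop /mapP [r Tr ->] /=]; first by rewrite mem_filter => /andP [_ /cols_w].
have [uniq_cols [_ [_ wf_rows]]] := wfT.
have r_vals := map_rval (proj1 (wf_rows _ Tr)) uniq_cols.
have [sum_le sum_eq] := rows_w r Tr.
split; first by rewrite -r_vals in sum_le; exact: leq_trans (sumn_filter_le _ _ _) sum_le.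
move=> size_nc; have all_nD : all (fun f => f \notin D) (tcols T).
  rewrite all_count eqn_leq count_size -size_filter size_nc.
  exact: size_tcols_weight_class wfT (conj cols_w rows_w).
by rewrite (all_filterP all_nD) in size_nc *; rewrite r_vals; exact: sum_eq.
Qed.

Lemma unit_class_Lambda k phi : unit_class k phi Lambda.
Proof. by split; [do !split | exists 1]. Qed.

Lemma unit_class_closed k phi : closed_class k (unit_class k phi).
Proof.
split; first by exists Lambda; exact: unit_class_Lambda.
split; first by move=> T [].
move=> T'; split; last by move=> clT'; exists T'; split; last exact: in_closure_refl (proj1 clT').
move=> [T [[wfT [n n_gt0 clT]] [D [nu [_ [dec_nu ->]]]]]]; split.
  exact/wf_table_Jop/wf_table_Iop.
by exists n => //; apply/weight_class_Jop; exact: weight_class_Iop wfT clT.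
Qed.

Definition unitv (m j : nat) : seq nat := map (fun i => nat_of_bool (i == j)) (iota 0 m).

Lemma sumn_unitv m j : j < m -> sumn (unitv m j) = 1.
Proof.
move=> lt_jm; rewrite /unitv sumn_count (eq_count (a2 := pred1 j)) => [|i].
  by rewrite count_uniq_mem ?iota_uniq // mem_iota add0n lt_jm.
by rewrite /= eq_sym.
Qed.

Lemma unitv_inj m i j : i < m -> j < m -> unitv m i = unitv m j -> i = j.
Proof.
move=> lt_im lt_jm /(congr1 (nth 0 ^~ i)).
by rewrite /unitv !(nth_map 0) ?size_iota // nth_iota // add0n eqxx; case: eqP.
Qed.

Definition unit_table phi n : table :=
  Table (wcols phi n) (map (fun j => (unitv (width phi n) j, [:: j])) (iota 0 (width phi n))).

Definition unit_nondet_tree phi n : dtree :=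
  DTree (map (fun j => Node (wattr n j) [:: (1, Leaf j)]) (iota 0 (width phi n))).

Definition unqueried n (p : seq (nat * nat)) (j : nat) : bool := wattr n j \notin map fst p.

Section UnitTable.
Variables (phi : nat -> nat) (n : nat).
Hypothesis n_gt0 : 0 < n.
Local Notation m := (width phi n).
Local Notation UT := (unit_table phi n).

Lemma rval_unit_table i j : i < m -> rval UT (unitv m j) (wattr n i) = (i == j).
Proof.
move=> lt_im; rewrite /rval -[tcols UT]/(wcols phi n) /wcols index_map; last exact: wattr_inj.
have -> : index i (iota 0 m) = i.
  by rewrite -[X in index X _](add0n i) -(nth_iota 0 0 lt_im) index_uniq ?size_iota ?iota_uniq.
by rewrite /unitv (nth_map 0) ?size_iota // nth_iota.
Qed.

Lemma unit_row_sat p j : j < m -> all (fun q => q.2 == 0) p ->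
  {subset map fst p <= wcols phi n} -> row_sat UT p (unitv m j) = unqueried n p j.
Proof.
move=> lt_jm; elim: p => //= -[f v] p IH /andP [/eqP /= -> zero_p] p_w.
have /mem_wcols [i lt_im ->] : f \in wcols phi n by apply: p_w; rewrite mem_head.
rewrite /unqueried /= in_cons IH //; last by move=> g pg; apply: p_w; rewrite in_cons pg orbT.
rewrite rval_unit_table // /unqueried negb_or (inj_eq (@wattr_inj n)) [j == i]eq_sym.
by case: (i == j).
Qed.

Lemma unit_table_row j : j < m -> (unitv m j, [:: j]) \in trows UT.
Proof. by move=> lt_jm; apply/mapP; exists j; rewrite ?mem_iota. Qed.

Lemma count_unqueried p : m <= count (unqueried n p) (iota 0 m) + size p.
Proof.
have := count_predC (unqueried n p) (iota 0 m); rewrite size_iota.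
suff : count (predC (unqueried n p)) (iota 0 m) <= size p by lia.
rewrite -size_filter -(size_map (wattr n)) -(size_map fst p) uniq_leq_size //.
  by rewrite (map_inj_uniq (@wattr_inj n)) filter_uniq ?iota_uniq.
by move=> f /mapP [j]; rewrite mem_filter /= /unqueried negbK => /andP [? _] ->.
Qed.

Lemma few_unqueried p : count (unqueried n p) (iota 0 m) <= 1 -> m.-1 <= size p.
Proof.
have := count_unqueried p; move: (count _ _) => c; move: (width _ _) => m'.
by rewrite -subn1; lia.
Qed.

Lemma two_unqueried p : 1 < count (unqueried n p) (iota 0 m) ->
  exists j1 j2, [/\ j1 < m, j2 < m, j1 != j2, unqueried n p j1 & unqueried n p j2].
Proof.
rewrite -size_filter; have := filter_uniq (unqueried n p) (iota_uniq 0 m).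
have mem_unq j : j \in filter (unqueried n p) (iota 0 m) -> j < m /\ unqueried n p j.
  by rewrite mem_filter mem_iota => /and3P [].
case: (filter _ _) mem_unq => [|j1 [|j2 s]] //= mem_unq /andP [j1_s _] _.
have [lt_j1 unq_j1] := mem_unq j1 (mem_head _ _).
have [lt_j2 unq_j2] : j2 < m /\ unqueried n p j2 by apply: mem_unq; rewrite !in_cons eqxx orbT.
by exists j1, j2; split => //; move: j1_s; rewrite in_cons negb_or => /andP [].
Qed.

Lemma unit_table_undecided p d j1 j2 :
  all (fun q => q.2 == 0) p -> {subset map fst p <= wcols phi n} ->
  j1 < m -> j2 < m -> j1 != j2 -> unqueried n p j1 -> unqueried n p j2 ->
  ~ (subtable UT p = Lambda \/ in_Pi (subtable UT p) d).
Proof.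
move=> zero_p p_w lt_j1 lt_j2 ne_j12 unq_j1 unq_j2.
have p_row j : j < m -> unqueried n p j ->
    (unitv m j, [:: j]) \in filter (fun r => row_sat UT p r.1) (trows UT).
  by move=> lt_j unq_j; rewrite mem_filter /= unit_row_sat // unq_j unit_table_row.
case=> [/subtable_Lambda rows0|]; first by have := p_row j1 lt_j1 unq_j1; rewrite rows0.
rewrite in_Pi_subtable => /allP Pi_d.
have /= := Pi_d _ (p_row j1 lt_j1 unq_j1); have /= := Pi_d _ (p_row j2 lt_j2 unq_j2).
by rewrite !inE => /eqP -> /eqP e; rewrite e eqxx in ne_j12.
Qed.

(* The adversary answers [0] to every query; as long as two columns are
   unqueried, two rows with different decisions remain, so the tree cannot stop. *)
Lemma adversary_path k t p : node_wf k t -> node_det t -> {subset node_atts t <= wcols phi n} ->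
  all (fun q => q.2 == 0) p -> {subset map fst p <= wcols phi n} -> subtree_for UT t p ->
  exists2 w, w \in node_paths t & count (unqueried n (p ++ w.1)) (iota 0 m) <= 1.
Proof.
elim/node_nested_ind: t p => [d|f ch IH] p wf_t det_t t_w zero_p p_w sub_t.
all: have [few|many] := leqP (count (unqueried n p) (iota 0 m)) 1.
1,3: have [w tw] := exists_node_path wf_t; exists w => //; apply: leq_trans few.
1,2: by apply: sub_count => j; rewrite /unqueried map_cat mem_cat negb_or => /andP [].
all: have [j1 [j2 [lt_j1 lt_j2 ne_j12 unq_j1 unq_j2]]] := two_unqueried many.
  case: (unit_table_undecided zero_p p_w lt_j1 lt_j2 ne_j12 unq_j1 unq_j2 (d := d)).
  by rewrite -[p]cats0; apply: (proj2 sub_t ([::], d)); rewrite inE.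
have /mem_wcols [i lt_im ef] : f \in wcols phi n by apply: t_w; rewrite mem_head.
have [j [lt_j unq_j ne_ij]] : exists j, [/\ j < m, unqueried n p j & i != j].
  by case: (eqVneq i j1) => [->|]; [exists j2 | exists j1].
have [c ch_c] : exists c, List.In (0, c) ch.
  apply: (subtree_for_child_exists sub_t (unit_table_row lt_j)).
    by rewrite unit_row_sat.
  by rewrite ef rval_unit_table // (negbTE ne_ij).
move: wf_t det_t => /= /andP [_ wf_ch] /andP [uniq_ch det_ch].
have [|||w cw few] := IH 0 c ch_c (p ++ [:: (f, 0)]) (all_In wf_ch ch_c) (all_In det_ch ch_c)
  _ _ _ (subtree_for_child uniq_ch sub_t ch_c).
- move=> g cg; apply: t_w; rewrite in_cons; apply/orP; right.
  by apply/(mem_flatten_map (fun q => node_atts q.2)); exists (0, c).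
- by rewrite all_cat zero_p.
- by move=> g; rewrite map_cat mem_cat inE => /orP [/p_w|/eqP ->] //=; apply: t_w; rewrite mem_head.
exists ((f, 0) :: w.1, w.2); last by rewrite -catA in few.
by apply/mem_node_paths_Node; exists 0, c, w.
Qed.

Lemma unit_table_det_lb k G : n <= phi n -> det_tree k G UT -> phi n <= psi_tree weight_measure G.
Proof.
move=> le_n detG; have [[_ [wfG [G_w _]]] [size_G det_G]] := detG.
case: G size_G wfG G_w det_G detG => -[|t [|??]] //= _ wfG G_w det_G detG.
have t_w : {subset node_atts t <= wcols phi n}.
  by move=> f tf; move/allP: G_w; apply; rewrite /dtree_atts /= cats0.
move: wfG det_G; rewrite /dtree_wf /= !andbT => wf_t det_t.
have nil_w : {subset map fst ([::] : seq (nat * nat)) <= wcols phi n} by [].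
have [w tw few] := @adversary_path k t [::] wf_t det_t t_w isT nil_w (subtree_for_root detG).
have [_ lb _] := width_bounds n_gt0 le_n.
have path_le : weight_measure (map fst w.1) <= psi_tree weight_measure (DTree [:: t]).
  rewrite /psi_tree dtree_paths1.
  exact: (@leq_bigmax_seq _ _ xpredT (fun tau => weight_measure (map fst tau.1)) _ tw).
apply: leq_trans lb (leq_trans _ path_le).
rewrite (@weight_measure_const _ n) ?size_map => [|f /(node_path_atts tw) /t_w].
  by rewrite leq_mul2l few_unqueried ?orbT.
exact: weight_wcols.
Qed.

Lemma unit_table_nonempty : n <= phi n -> UT <> Lambda.
Proof.
by move=> le_n; have [+ _ _] := width_bounds n_gt0 le_n; rewrite /unit_table /wcols; case: m.
Qed.

Lemma unit_class_unit_table k : 1 < k -> n <= phi n -> unit_class k phi UT.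
Proof.
move=> k_gt1 le_n; have [m_ge2 _ _] := width_bounds n_gt0 le_n.
split; last first.
  exists n => //; split => // r /mapP [j]; rewrite mem_iota => lt_jm ->.
  by rewrite -[(_, _).1]/(unitv m j) sumn_unitv.
split; first by rewrite /= /wcols (map_inj_uniq (@wattr_inj n)) iota_uniq.
split; first by rewrite /= /wcols; case: m m_ge2.
split.
  rewrite /= -map_comp map_inj_in_uniq ?iota_uniq // => i j.
  by rewrite !mem_iota /= => lt_i lt_j; apply: unitv_inj.
move=> r /mapP [j _ ->] /=; rewrite /unitv /wcols !size_map; split => //; split => //.
by apply/allP => v /mapP [i _ ->]; case: (i == j) => /=; lia.
Qed.

Lemma nondet_tree_unit_table k : 1 < k -> n <= phi n ->
  nondet_tree k (unit_nondet_tree phi n) UT.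
Proof.
move=> k_gt1 le_n; have [m_ge2 _ _] := width_bounds n_gt0 le_n.
have paths_G tau : tau \in dtree_paths (unit_nondet_tree phi n) ->
    exists2 i, i < m & tau = ([:: (wattr n i, 1)], i).
  move/(mem_flatten_map node_paths) => [t [/List.in_map_iff [i [<- /In_memE]]]].
  by rewrite mem_iota inE => lt_im /eqP ->; exists i.
split; first exact: unit_table_nonempty.
split.
  rewrite /dtree_wf /= size_map size_iota all_map; apply/andP; split; first lia.
  by apply/allP => j _ /=; rewrite k_gt1.
split.
  apply/allP => f /(mem_flatten_map node_atts) [t [/List.in_map_iff [i [<- /In_memE]]]].
  by rewrite mem_iota /= inE => lt_im /eqP ->; rewrite /wcols map_f // mem_iota.
split=> [r /mapP [j]|tau /paths_G [i lt_im ->]]; last first.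
  apply: subtable_decided => r /mapP [j _ ->].
  by rewrite /row_sat /= rval_unit_table // andbT inE; case: (i == j).
rewrite mem_iota => lt_jm ->; exists ([:: (wattr n j, 1)], j).
  apply/(mem_flatten_map node_paths); exists (Node (wattr n j) [:: (1, Leaf j)]).
  split; last by rewrite inE.
  by apply/List.in_map_iff; exists j; split; last apply/In_memE; rewrite ?mem_iota.
by rewrite trows_subtable mem_filter /row_sat /= rval_unit_table // eqxx unit_table_row.
Qed.

Lemma psi_tree_unit_nondet_tree : psi_tree weight_measure (unit_nondet_tree phi n) <= n.
Proof.
rewrite /psi_tree; apply/bigmax_leqP_seq => tau /(mem_flatten_map node_paths).
move=> [t [/List.in_map_iff [i [<- _]]]]; rewrite inE => /eqP -> _.
by rewrite /weight_measure /= weight_wattr // addn0.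
Qed.

End UnitTable.

Lemma exists_psi_a k psi T G : T <> Lambda -> nondet_tree k G T ->
  exists2 a, is_psi_a k psi T a & a <= psi_tree psi G.
Proof.
move=> nLambda GT.
have [a [[G' [G'T <-]] min_a]] :=
  ex_minimal (ex_intro (fun a => exists G, nondet_tree k G T /\ psi_tree psi G = a) _
                        (ex_intro _ G (conj GT erefl))).
exists (psi_tree psi G'); last by apply: min_a; exists G.
by right; split => //; split => [|G'' G''T]; [exists G' | apply: min_a; exists G''].
Qed.

Lemma exists_psi_d k psi T G : T <> Lambda -> det_tree k G T ->
  exists2 d, is_psi_d k psi T d & d <= psi_tree psi G.
Proof.
move=> nLambda GT.
have [d [[G' [G'T <-]] min_d]] :=
  ex_minimal (ex_intro (fun d => exists G, det_tree k G T /\ psi_tree psi G = d) _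
                        (ex_intro _ G (conj GT erefl))).
exists (psi_tree psi G'); last by apply: min_d; exists G.
by right; split => //; split => [|G'' G''T]; [exists G' | apply: min_d; exists G''].
Qed.

Lemma separating_behead k T s : wf_table k T ->
  (forall r, r \in trows T -> sumn r.1 = s) -> separating T (behead (tcols T)).
Proof.
move=> wfT sum_s r1 r2 Tr1 Tr2 eq_vals; apply: (separating_tcols wfT) => // c _.
have [uniq_cols [_ [_ wf_rows]]] := wfT.
suff e : r1.1 = r2.1 by rewrite e.
rewrite -(map_rval (proj1 (wf_rows _ Tr1)) uniq_cols) -(map_rval (proj1 (wf_rows _ Tr2)) uniq_cols).
have := sum_s _ Tr2; rewrite -(sum_s _ Tr1).
rewrite -(map_rval (proj1 (wf_rows _ Tr1)) uniq_cols) -(map_rval (proj1 (wf_rows _ Tr2)) uniq_cols).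
case: (tcols T) eq_vals => [|c0 cs] //= eq_vals.
have -> : map (rval T r1.1) cs = map (rval T r2.1) cs by apply/eq_in_map.
by move/eqP; rewrite eqn_add2r => /eqP ->.
Qed.

Lemma weight_class_separating k phi n T : wf_table k T -> weight_class phi n T ->
  exists cs, [/\ {subset cs <= tcols T}, separating T cs & size cs <= (width phi n).-1].
Proof.
move=> wfT clT; have := size_tcols_weight_class wfT clT.
rewrite leq_eqVlt => /predU1P [full|lt_w]; last first.
  by exists (tcols T); split; [| exact: separating_tcols wfT | rewrite -ltnS (ltn_predK lt_w)].
exists (behead (tcols T)); split.
- by case: (tcols T) => //= c cs c'; rewrite in_cons => ->; rewrite orbT.
- by apply: (separating_behead wfT (s := 1)) => r Tr; apply: (proj2 (proj2 clT r Tr) full).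
- by rewrite size_behead full.
Qed.

Lemma psi_d_le_separating k psi T cs d : 0 < k -> wf_table k T -> T <> Lambda ->
  {subset cs <= tcols T} -> separating T cs -> is_psi_d k psi T d -> d <= psi cs.
Proof.
move=> k_gt0 wfT nLambda cs_T sep_cs [[/nLambda]//|[_ [_ min_d]]].
apply: leq_trans (min_d _ (det_tree_query_tree k_gt0 nLambda wfT cs_T sep_cs)) _.
exact: psi_tree_query_tree.
Qed.

Lemma weight_le_psi_a k T G n : wf_table k T -> T <> Lambda -> ~ (exists d, in_Pi T d) ->
  nondet_tree k G T -> {in tcols T, forall c, weight c = n} -> n <= psi_tree weight_measure G.
Proof.
move=> wfT nLambda no_common GT weight_n.
have [tau [x [w [G_tau tau_xw]]]] := nondet_tree_nonempty_path wfT nLambda no_common GT.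
have x_T : x.1 \in tcols T.
  have [_ [_ [/allP G_T _]]] := GT; apply: G_T; apply: (dtree_path_atts G_tau).
  by rewrite tau_xw mem_head.
apply: leq_trans
  (@leq_bigmax_seq _ _ xpredT (fun tau => weight_measure (map fst tau.1)) _ G_tau isT).
by rewrite tau_xw /weight_measure /= weight_n // leq_addr.
Qed.

Lemma H_set_unit_class_le k phi n d : 1 < k -> (forall m n, m <= n -> phi m <= phi n) ->
  (forall n, n <= phi n) -> H_set k weight_measure (unit_class k phi) n d -> d <= phi n + n.
Proof.
move=> k_gt1 phi_mono phi_ge [T [[wfT [n0 n0_gt0 clT]] [[a [psi_a le_a]] psi_d]]].
have [[_ ->] //|[nLambda [_ min_d]]] := psi_d.
have [[c Pi_c]|no_common] := classic (exists c, in_Pi T c).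
  by have := min_d _ (det_tree_Leaf k nLambda Pi_c); rewrite psi_tree_Leaf leqn0 => /eqP ->.
have weight_n0 : {in tcols T, forall c, weight c = n0}.
  by move=> c /(proj1 clT); apply: weight_wcols.
have le_n0 : n0 <= n.
  have [[/nLambda] //|[_ [[G [GT psi_G]] _]]] := psi_a.
  by apply: leq_trans le_a; rewrite -psi_G (weight_le_psi_a wfT nLambda no_common GT weight_n0).
have [cs [cs_T sep_cs size_cs]] := weight_class_separating wfT clT.
have := psi_d_le_separating (ltnW k_gt1) wfT nLambda cs_T sep_cs psi_d.
rewrite (@weight_measure_const _ n0) => [le_d|c /cs_T]; last exact: weight_n0.
have [_ _ ub] := width_bounds n0_gt0 (phi_ge n0).
have := leq_trans le_d (leq_trans (leq_mul (leqnn n0) size_cs) ub).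
by have := phi_mono _ _ le_n0; lia.
Qed.

Lemma H_set_unit_class_ge k phi n : 1 < k -> (forall n, n <= phi n) -> phi 0 = 0 ->
  exists2 d, H_set k weight_measure (unit_class k phi) n d & phi n <= d.
Proof.
move=> k_gt1 phi_ge phi0; have [->|n_gt0] := posnP n.
  exists 0; last by rewrite phi0.
  by exists Lambda; split; [exact: unit_class_Lambda | split; [exists 0; split => //; left | left]].
have le_n := phi_ge n; set UT := unit_table phi n.
have nLambda : UT <> Lambda := unit_table_nonempty n_gt0 le_n.
have clUT := unit_class_unit_table n_gt0 k_gt1 le_n.
have [a psi_a le_a] :=
  exists_psi_a weight_measure nLambda (nondet_tree_unit_table n_gt0 k_gt1 le_n).
have [d psi_d _] := exists_psi_d weight_measure nLambda
  (det_tree_query_tree (ltnW k_gt1) nLambda (proj1 clUT) (fun c => id)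
                       (separating_tcols (proj1 clUT))).
exists d; first by exists UT; split => //; split => //; exists a; split => //;
  exact: leq_trans le_a (psi_tree_unit_nondet_tree phi n_gt0).
have [[/nLambda] //|[_ [[G [GT <-]] _]]] := psi_d.
exact: (unit_table_det_lb n_gt0 le_n GT).
Qed.

Theorem theorem3 (k : nat) (phi : nat -> nat) :
  1 < k ->
  (forall m n, m <= n -> phi m <= phi n) ->
  (forall n, n <= phi n) ->
  phi 0 = 0 ->
  exists (A : table -> Prop) (psi : seq nat -> nat),
    closed_class k A /\ bounded_measure psi /\
    H_everywhere_defined k psi A /\
    (forall n, exists h, H_value k psi A n h /\ phi n <= h <= phi n + n).
Proof.
move=> k_gt1 phi_mono phi_ge phi0.
exists (unit_class k phi), weight_measure.
have H_le n d := @H_set_unit_class_le k phi n d k_gt1 phi_mono phi_ge.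
have H_defined n : H_defined k weight_measure (unit_class k phi) n.
  by exists (phi n + n); apply: H_le.
split; first exact: unit_class_closed.
split; first exact: weight_measure_bounded.
split=> // n; have [d Hd le_d] := H_set_unit_class_ge n k_gt1 phi_ge phi0.
have [h [Hh max_h]] := ex_maximal (ex_intro _ d Hd) (H_le n).
by exists h; split; [split | rewrite H_le // (leq_trans le_d (max_h _ Hd))].
Qed.
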